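(* Let $(X,\tau_1,\tau_2)$ be a bitopological space, $i,j\in\{1,2\}$, $i\neq j$, which is $(i,j)$-almost regular, $(j,i)$-weakly $P$, a $j$-$P$-space and $(i,j)_r$-nearly paralindelöf. Suppose there is a set $A\subseteq X$ with $j\text{-}\mathrm{cl}(A)=X$ such that the subspace $(A,\tau_1|_A,\tau_2|_A)$ is $(i,j)$-nearly Lindelöf. Then $X$ is $(i,j)$-nearly Lindelöf.
   Context: For a bitopological space $(Y,\sigma_1,\sigma_2)$, $i,j\in\{1,2\}$, $i\neq j$, and $k\in\{1,2\}$, $k\text{-}\mathrm{int}$ and $k\text{-}\mathrm{cl}$ denote interior and closure with respect to $\sigma_k$; ''$k$-open'' means $\sigma_k$-open. A set $B$ is $(i,j)$-regular open if $B=i\text{-}\mathrm{int}(j\text{-}\mathrm{cl}(B))$. $Y$ is $(i,j)$-almost regular if for each $y\in Y$ and each $(i,j)$-regular open $U\ni y$ there is an $(i,j)$-regular open $V$ with $y\in V\subseteq j\text{-}\mathrm{cl}(V)\subseteq U$. A family is a cover of $Y$ if its union is $Y$. A family is $k$-locally countable if every point has a $k$-open neighbourhood meeting at most countably many of its members. $Y$ is a $k$-$P$-space if every intersection of countably many $k$-open sets is $k$-open. $Y$ is $(j,i)$-weakly $P$ if for every countable family $\{U_n\}$ of $j$-open sets, $i\text{-}\mathrm{cl}(\bigcup_n U_n)=\bigcup_n i\text{-}\mathrm{cl}(U_n)$. $Y$ is $(i,j)_r$-nearly paralindelöf if every cover $\{U_\alpha:\alpha\in\Delta\}$ of $Y$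 by $(i,j)$-regular open sets has a $j$-locally countable cover $\{V_\beta:\beta\in B\}$ of $Y$ by $(i,j)$-regular open sets such that for each $\beta$ there is $\alpha(\beta)\in\Delta$ with $j\text{-}\mathrm{cl}(V_\beta)\subseteq U_{\alpha(\beta)}$. $Y$ is $(i,j)$-nearly Lindelöf if for every cover $\{U_\alpha:\alpha\in\Delta\}$ of $Y$ by $i$-open sets there are countably many indices $\alpha_n$, $n\in\mathbb N$, with $Y=\bigcup_n i\text{-}\mathrm{int}(j\text{-}\mathrm{cl}(U_{\alpha_n}))$. Subspaces carry the relative topologies. *)

From Stdlib Require Import Classical.

Definition set (X : Type) := X -> Prop.

Definition is_topology {X : Type} (t : set X -> Prop) : Prop :=
  t (fun _ => False) /\ t (fun _ => True) /\
  (forall U V : set X, t U -> t V -> t (fun x => U x /\ V x)) /\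
  (forall F : set X -> Prop, (forall U, F U -> t U) ->
     t (fun x => exists U, F U /\ U x)).

Definition subset {X : Type} (A B : set X) : Prop := forall x, A x -> B x.
Definition seteq {X : Type} (A B : set X) : Prop := forall x, A x <-> B x.

Definition interior {X : Type} (t : set X -> Prop) (A : set X) : set X :=
  fun x => exists U, t U /\ U x /\ subset U A.
Definition closure {X : Type} (t : set X -> Prop) (A : set X) : set X :=
  fun x => forall U, t U -> U x -> exists y, U y /\ A y.

Definition countable {D : Type} (C : D -> Prop) : Prop :=
  exists g : D -> nat, forall a b, C a -> C b -> g a = g b -> a = b.

Definition regular_open {X : Type} (ti tj : set X -> Prop) (B : set X) : Prop :=
  seteq B (interior ti (closure tj B)).

Definition almost_regular {X : Type} (ti tj : set X -> Prop) : Prop :=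
  forall (y : X) (U : set X), regular_open ti tj U -> U y ->
    exists V, regular_open ti tj V /\ V y /\
      subset V (closure tj V) /\ subset (closure tj V) U.

Definition is_cover {X D : Type} (U : D -> set X) : Prop :=
  forall x, exists a, U a x.

Definition locally_countable {X B : Type} (tk : set X -> Prop) (V : B -> set X) : Prop :=
  forall x, exists W, tk W /\ W x /\
    countable (fun b => exists y, W y /\ V b y).

Definition P_space {X : Type} (tk : set X -> Prop) : Prop :=
  forall U : nat -> set X, (forall n, tk (U n)) -> tk (fun x => forall n, U n x).

(* (j,i)-weakly P: ti-closure of countable unions of tj-open sets *)
Definition weakly_P {X : Type} (tj ti : set X -> Prop) : Prop :=
  forall U : nat -> set X, (forall n, tj (U n)) ->
    seteq (closure ti (fun x => exists n, U n x))
          (fun x => exists n, closure ti (U n) x).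

Definition r_nearly_paralindelof {X : Type} (ti tj : set X -> Prop) : Prop :=
  forall (D : Type) (U : D -> set X),
    (forall a, regular_open ti tj (U a)) -> is_cover U ->
    exists (B : Type) (V : B -> set X),
      (forall b, regular_open ti tj (V b)) /\ is_cover V /\
      locally_countable tj V /\
      (forall b, exists a, subset (closure tj (V b)) (U a)).

Definition nearly_lindelof {X : Type} (ti tj : set X -> Prop) : Prop :=
  forall (D : Type) (U : D -> set X),
    (forall a, ti (U a)) -> is_cover U ->
    exists C : D -> Prop, countable C /\
      forall x, exists a, C a /\ interior ti (closure tj (U a)) x.

Definition subspace_top {X : Type} (t : set X -> Prop) (A : set X)
  : set {x : X | A x} -> Prop :=
  fun V => exists U, t U /\ forall z : {x : X | A x}, V z <-> U (proj1_sig z).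

Inductive idx := one | two.
Definition tau {X : Type} (t1 t2 : set X -> Prop) (k : idx) : set X -> Prop :=
  match k with one => t1 | two => t2 end.

(* Refine the regular open cover {i-int j-cl U_a} to a cover {V_b} with
   j-cl V_b inside some i-int j-cl U_a, and trace it on A. Nearly Lindelöfness
   of A yields countably many V_b, b in C, whose traces have A inside the union
   of their i-int j-cl, hence A inside the union of the j-cl V_b. This union
   is already all of X: a point outside it has the j-open neighbourhood
   "outside every j-cl V_b, b in C" (an intersection of countably many j-open
   sets in a j-P-space), which must meet the j-dense set A. *)
From Stdlib Require Import Classical ClassicalEpsilon FunctionalExtensionality PropExtensionality.

Lemma seteq_eq {X : Type} (S T : set X) : seteq S T -> S = T.
Proof.
  intro HST; apply functional_extensionality; intro x.
  apply propositional_extensionality; apply HST.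
Qed.

Lemma open_seteq {X : Type} (t : set X -> Prop) (S T : set X) :
  t S -> seteq S T -> t T.
Proof. intros HS HST; rewrite <- (seteq_eq S T HST); exact HS. Qed.

Lemma countable_image {D E : Type} (C : D -> Prop) (f : D -> E) :
  countable C -> countable (fun e => exists d, C d /\ f d = e).
Proof.
  intros [g Hg].
  destruct (choice (fun e n => (exists d, C d /\ f d = e) ->
                               exists d, C d /\ f d = e /\ g d = n)) as [h Hh].
  { intro e; destruct (classic (exists d, C d /\ f d = e)) as [[d [Cd fd]] | Hn].
    - exists (g d); intros _; exists d; auto.
    - exists 0; intro He; contradiction. }
  exists h; intros e1 e2 He1 He2 Hh12.
  destruct (Hh e1 He1) as [d1 [Cd1 [<- gd1]]].
  destruct (Hh e2 He2) as [d2 [Cd2 [<- gd2]]].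
  rewrite (Hg d1 d2 Cd1 Cd2 (eq_trans gd1 (eq_trans Hh12 (eq_sym gd2)))).
  reflexivity.
Qed.

Section Topology.

Variables (X : Type) (t : set X -> Prop).
Hypothesis Ht : is_topology t.

Lemma open_of_local (S : set X) :
  (forall x, S x -> exists U, t U /\ U x /\ subset U S) -> t S.
Proof.
  intro Hloc; destruct Ht as [_ [_ [_ Hunion]]].
  apply (open_seteq _ (fun x => exists U, (t U /\ subset U S) /\ U x)).
  - apply Hunion; intros U HU; apply HU.
  - intro x; split.
    + intros [U [[_ HUS] Ux]]; exact (HUS x Ux).
    + intro Sx; destruct (Hloc x Sx) as [U [tU [Ux HUS]]]; eauto.
Qed.

Lemma interior_open (S : set X) : t (interior t S).
Proof.
  apply open_of_local; intros x [U [tU [Ux HUS]]].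
  exists U; repeat split; auto.
  intros y Uy; exists U; auto.
Qed.

Lemma open_compl_closure (S : set X) : t (fun y => ~ closure t S y).
Proof.
  apply open_of_local; intros x Hx.
  apply not_all_ex_not in Hx as [U Hx].
  apply imply_to_and in Hx as [tU Hx]; apply imply_to_and in Hx as [Ux HU].
  exists U; repeat split; auto.
  intros y Uy Hcl; destruct (Hcl U tU Uy) as [z [Uz Sz]]; eauto.
Qed.

Hypothesis HP : P_space t.

Lemma P_space_countable_inter {D : Type} (C : D -> Prop) (F : D -> set X) :
  countable C -> (forall d, C d -> t (F d)) -> t (fun x => forall d, C d -> F d x).
Proof.
  intros [g Hg] HF.
  set (O := fun n x => forall d, C d -> g d = n -> F d x).
  assert (HO : forall n, t (O n)).
  { intro n; destruct (classic (exists d, C d /\ g d = n)) as [[d0 [Cd0 gd0]] | Hn].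
    - apply (open_seteq _ (F d0)); [exact (HF d0 Cd0)|].
      intro x; split.
      + intros Fx d Cd gd; rewrite (Hg d d0 Cd Cd0 (eq_trans gd (eq_sym gd0))); exact Fx.
      + intro Ox; exact (Ox d0 Cd0 gd0).
    - apply (open_seteq _ (fun _ => True)); [apply Ht|].
      intro x; split; [|auto].
      intros _ d Cd gd; exfalso; eauto. }
  apply (open_seteq _ (fun x => forall n, O n x)); [exact (HP O HO)|].
  intro x; split.
  - intros Ox d Cd; exact (Ox (g d) d Cd eq_refl).
  - intros Fx n d Cd _; exact (Fx d Cd).
Qed.

End Topology.

Lemma subset_closure {X : Type} (t : set X -> Prop) (S : set X) : subset S (closure t S).
Proof. intros x Sx U _ Ux; eauto. Qed.

Lemma interior_subset {X : Type} (t : set X -> Prop) (S : set X) : subset (interior t S) S.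
Proof. intros x [U [_ [Ux HUS]]]; exact (HUS x Ux). Qed.

Lemma subspace_closure_subset {X : Type} (t : set X -> Prop) (A V : set X)
  (z : {x : X | A x}) :
  closure (subspace_top t A) (fun w => V (proj1_sig w)) z -> closure t V (proj1_sig z).
Proof.
  intros Hcl U tU Uz.
  destruct (Hcl (fun w => U (proj1_sig w))) as [w [Uw Vw]]; eauto.
  exists U; split; auto; reflexivity.
Qed.

Lemma regular_open_open {X : Type} (ti tj : set X -> Prop) (B : set X) :
  is_topology ti -> regular_open ti tj B -> ti B.
Proof.
  intros Hti HB; apply (open_seteq _ (interior ti (closure tj B))).
  - exact (interior_open X ti Hti _).
  - intro x; symmetry; apply HB.
Qed.

Lemma regular_open_interior_closure {X : Type} (ti tj : set X -> Prop) (S : set X) :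
  is_topology ti -> regular_open ti tj (interior ti (closure tj S)).
Proof.
  intros Hti x; split.
  - intro Hx; exists (interior ti (closure tj S)).
    split; [apply interior_open; exact Hti|].
    split; [exact Hx | apply subset_closure].
  - intros [W [tiW [Wx HW]]]; exists W; repeat split; auto.
    intros y Wy U tjU Uy.
    destruct (HW y Wy U tjU Uy) as [z [Uz Hz]].
    exact (interior_subset ti (closure tj S) z Hz U tjU Uz).
Qed.

Lemma countable_closure_cover_of_dense {X B : Type} (ti tj : set X -> Prop)
  (Htj : is_topology tj) (HP : P_space tj) (A : set X)
  (Hdense : seteq (closure tj A) (fun _ => True))
  (HA : nearly_lindelof (subspace_top ti A) (subspace_top tj A))
  (V : B -> set X) :
  (forall b, ti (V b)) -> is_cover V ->
  exists C : B -> Prop, countable C /\ forall x, exists b, C b /\ closure tj (V b) x.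
Proof.
  intros HV Hcov.
  destruct (HA B (fun b w => V b (proj1_sig w))) as [C [HC HAC]].
  - intro b; exists (V b); split; [exact (HV b) | reflexivity].
  - intros [x Ax]; exact (Hcov x).
  - exists C; split; [exact HC|]; intro x.
    apply NNPP; intro Hx.
    set (O := fun y => forall b, C b -> ~ closure tj (V b) y).
    assert (tjO : tj O).
    { apply (P_space_countable_inter X tj Htj HP C); [exact HC|].
      intros b _; exact (open_compl_closure X tj Htj _). }
    assert (Ox : O x) by (intros b Cb Hb; eauto).
    destruct (proj2 (Hdense x) I O tjO Ox) as [y [Oy Ay]].
    destruct (HAC (exist _ y Ay)) as [b [Cb Hb]].
    apply (Oy b Cb).
    exact (subspace_closure_subset tj A (V b) (exist _ y Ay)
             (interior_subset _ _ _ Hb)).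
Qed.

Lemma nearly_lindelof_of_dense_subspace {X : Type} (ti tj : set X -> Prop)
  (Hti : is_topology ti) (Htj : is_topology tj)
  (HP : P_space tj) (Hpara : r_nearly_paralindelof ti tj)
  (A : set X) (Hdense : seteq (closure tj A) (fun _ => True))
  (HA : nearly_lindelof (subspace_top ti A) (subspace_top tj A)) :
  nearly_lindelof ti tj.
Proof.
  intros D U HU Hcov.
  destruct (Hpara D (fun a => interior ti (closure tj (U a)))) as
    [B [V [HVreg [HVcov [_ HVref]]]]].
  - intro a; apply regular_open_interior_closure; exact Hti.
  - intro x; destruct (Hcov x) as [a Ua]; exists a.
    exists (U a); repeat split; auto; apply subset_closure.
  - destruct (choice _ HVref) as [f Hf].
    destruct (countable_closure_cover_of_dense ti tj Htj HP A Hdense HA V)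
      as [C [HC HCcov]].
    + intro b; exact (regular_open_open ti tj (V b) Hti (HVreg b)).
    + exact HVcov.
    + exists (fun a => exists b, C b /\ f b = a); split.
      * apply countable_image; exact HC.
      * intro x; destruct (HCcov x) as [b [Cb Hb]].
        exists (f b); split; [eauto | exact (Hf b x Hb)].
Qed.

Theorem mainTheorem12 (X : Type) (t1 t2 : set X -> Prop)
  (Ht1 : is_topology t1) (Ht2 : is_topology t2) (i j : idx) (Hij : i <> j)
  (Hreg : almost_regular (tau t1 t2 i) (tau t1 t2 j))
  (HwP : weakly_P (tau t1 t2 j) (tau t1 t2 i))
  (HP : P_space (tau t1 t2 j))
  (Hpara : r_nearly_paralindelof (tau t1 t2 i) (tau t1 t2 j))
  (A : set X) (Hdense : seteq (closure (tau t1 t2 j) A) (fun _ => True))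
  (HA : nearly_lindelof (subspace_top (tau t1 t2 i) A) (subspace_top (tau t1 t2 j) A)) :
  nearly_lindelof (tau t1 t2 i) (tau t1 t2 j).
Proof.
  assert (Htau : forall k, is_topology (tau t1 t2 k)) by (intros []; assumption).
  exact (nearly_lindelof_of_dense_subspace _ _ (Htau i) (Htau j) HP Hpara A Hdense HA).
Qed.
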